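(* In the multi-product pricing model of the context with a positive vector $f\in\mathbb{R}^n$, suppose that (P1) for every $j\in M$ and every $i\in N$, $d_{ij}(p)$ is (weakly) increasing in $p_k$ for every $k\ne i$; and (P2) for every $j\in M$, $\sum_{i\in N}f_id_{ij}(p)$ is (weakly) decreasing in $p_i$ for every $i\in N$. Then Assumption A1 holds, i.e. $G(q)\le H(q)$ for all $q\ge0$.
   Context: Products $N=\{1,\dots,n\}$, customer types $M=\{1,\dots,m\}$, non-negative demand functions $d_{ij}:\mathbb{R}^n_{\ge0}\to\mathbb{R}_{\ge0}$ (demand for product $i$ by type $j$ at price vector $p$); $R_j(p)=\sum_ip_id_{ij}(p)$; weights $\theta_j>0$ with $\sum_j\theta_j=1$. For each $j$, $\bar p^j=(\bar p_{1j},\dots,\bar p_{nj})$ is a maximizer of $R_j$ over $p\ge0$ with positive finite components. For $q\ge 0$, $\delta_{ij}(q):=1$ if $q\le\bar p_{ij}/f_i$ and $0$ otherwise, $G(q):=\sum_j\theta_j\sum_if_id_{ij}(\bar p^j)\delta_{ij}(q)$, and $H(q):=\sum_j\theta_j\sum_if_id_{ij}(qf)$. Assumption A1 is the statement $G(q)\le H(q)$ for all $q\ge0$. *)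

From mathcomp Require Import all_boot all_order all_algebra.
Set Implicit Arguments. Unset Strict Implicit. Unset Printing Implicit Defensive.
Import Order.TTheory GRing.Theory Num.Theory.
Local Open Scope ring_scope.

Section Pricing.
Variables (R : realFieldType) (n m : nat).

Definition nonneg_price (p : 'I_n -> R) : Prop := forall i, 0 <= p i.

Definition set_price (p : 'I_n -> R) (k : 'I_n) (t : R) : 'I_n -> R :=
  fun l => if l == k then t else p l.

(* demand d i j p : demand for product i by type j at prices p *)
Variable d : 'I_n -> 'I_m -> ('I_n -> R) -> R.

Definition revenue (j : 'I_m) (p : 'I_n -> R) : R := \sum_(i < n) p i * d i j p.

Variables (theta : 'I_m -> R) (f : 'I_n -> R) (pbar : 'I_m -> 'I_n -> R).

Definition delta (i : 'I_n) (j : 'I_m) (q : R) : R :=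
  if q <= pbar j i / f i then 1 else 0.

Definition Gfun (q : R) : R :=
  \sum_(j < m) theta j * \sum_(i < n) f i * d i j (pbar j) * delta i j q.

Definition Hfun (q : R) : R :=
  \sum_(j < m) theta j * \sum_(i < n) f i * d i j (fun k => q * f k).

Definition assumption_A1 : Prop := forall q : R, 0 <= q -> Gfun q <= Hfun q.

End Pricing.

From mathcomp Require Import all_boot all_order all_algebra.
From Stdlib Require Import FunctionalExtensionality.
Import Order.TTheory GRing.Theory Num.Theory.
Local Open Scope ring_scope.

(* Fix a customer type j and let p be the componentwise maximum of pbar^j and
   q f.  A product i with delta_ij(q) = 1 keeps its price pbar_ij in p while
   all other prices weakly rise, so by (P1) its demand weakly rises; lowering
   p down to q f then weakly raises sum_i f_i d_ij by (P2).  Hence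
   sum_i f_i d_ij(pbar^j) delta_ij(q) <= sum_i f_i d_ij(p) <= sum_i f_i d_ij(q f),
   and averaging with the weights theta_j gives G(q) <= H(q). *)

Section CoordinatewiseMonotone.
Variables (R : realFieldType) (n : nat).
Implicit Types (p : 'I_n -> R) (r : nat).

Lemma nonneg_price_le p p' :
  nonneg_price p -> (forall l, p l <= p' l) -> nonneg_price p'.
Proof. by move=> p_ge0 le_pp' l; apply: le_trans (p_ge0 l) (le_pp' l). Qed.

Definition splice_price r p p' : 'I_n -> R :=
  fun l => if (l < r)%N then p' l else p l.

Lemma splice_price0 p p' : splice_price 0 p p' = p.
Proof. by apply: functional_extensionality => l; rewrite /splice_price ltn0. Qed.

Lemma splice_price_ord p p' : splice_price n p p' = p'.
Proof. by apply: functional_extensionality => l; rewrite /splice_price ltn_ord. Qed.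

Lemma splice_priceS p p' (k : 'I_n) :
  splice_price k.+1 p p' = set_price (splice_price k p p') k (p' k).
Proof.
apply: functional_extensionality => l; rewrite /set_price /splice_price ltnS.
case: eqVneq => [-> | ne_lk]; first by rewrite leqnn.
by move: ne_lk; rewrite leq_eqVlt -val_eqE /= => /negPf ->.
Qed.

Lemma set_price_splice p p' (k : 'I_n) :
  set_price (splice_price k p p') k (p k) = splice_price k p p'.
Proof.
apply: functional_extensionality => l; rewrite /set_price /splice_price.
by case: eqVneq => [-> | //]; rewrite ltnn.
Qed.

Lemma splice_price_ge0 r p p' :
  nonneg_price p -> (forall l, p l <= p' l) -> nonneg_price (splice_price r p p').
Proof.
move=> p_ge0 le_pp' l; rewrite /splice_price.
by case: ifP => _; [apply: nonneg_price_le le_pp' l | apply: p_ge0].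
Qed.

Lemma le_coordwise_mono (g : ('I_n -> R) -> R) (A : pred 'I_n) :
  (forall p k t t', nonneg_price p -> 0 <= t -> t <= t' -> A k ->
     g (set_price p k t) <= g (set_price p k t')) ->
  forall p p', nonneg_price p -> (forall l, p l <= p' l) ->
  (forall l, ~~ A l -> p' l = p l) -> g p <= g p'.
Proof.
move=> g_mono p p' p_ge0 le_pp' eq_notA.
suff le_splice r : (r <= n)%N -> g p <= g (splice_price r p p').
  by rewrite -(splice_price_ord p p'); apply: le_splice.
elim: r => [_ | r IHr lt_rn]; first by rewrite splice_price0.
apply: le_trans (IHr (ltnW lt_rn)) _.
pose k := Ordinal lt_rn; rewrite -[r]/(val k) splice_priceS.
rewrite -{1}(set_price_splice p p' k).
have [Ak | notAk] := boolP (A k); last by rewrite eq_notA.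
by apply: g_mono; [apply: splice_price_ge0 | apply: p_ge0 | apply: le_pp' | ].
Qed.

End CoordinatewiseMonotone.

Section OneCustomerType.
Variables (R : realFieldType) (n : nat) (f : 'I_n -> R).
Variable D : 'I_n -> ('I_n -> R) -> R.
Implicit Types (p : 'I_n -> R).

Hypothesis f_ge0 : forall i, 0 <= f i.
Hypothesis D_ge0 : forall i p, nonneg_price p -> 0 <= D i p.
Hypothesis D_substitutes : forall i k, k != i -> forall p t t',
  nonneg_price p -> 0 <= t -> t <= t' ->
  D i (set_price p k t) <= D i (set_price p k t').
Hypothesis weighted_D_nonincreasing : forall k p t t',
  nonneg_price p -> 0 <= t -> t <= t' ->
  \sum_(i < n) f i * D i (set_price p k t') <=
  \sum_(i < n) f i * D i (set_price p k t).

Lemma demand_le_raise_others i p p' :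
  nonneg_price p -> (forall l, p l <= p' l) -> p' i = p i -> D i p <= D i p'.
Proof.
move=> p_ge0 le_pp' eq_i; apply: (@le_coordwise_mono _ _ (D i) (predC1 i)) => //.
  by move=> q k t t' q_ge0 t_ge0 le_tt' ne_ki; apply: D_substitutes.
by move=> l; rewrite negbK => /eqP ->.
Qed.

Lemma weighted_demand_le_lower p p' :
  nonneg_price p -> (forall l, p l <= p' l) ->
  \sum_(i < n) f i * D i p' <= \sum_(i < n) f i * D i p.
Proof.
move=> p_ge0 le_pp'; rewrite -lerN2.
apply: (@le_coordwise_mono _ _ (fun q => - \sum_(i < n) f i * D i q) predT) => //.
by move=> q k t t' q_ge0 t_ge0 le_tt' _; rewrite lerN2; apply: weighted_D_nonincreasing.
Qed.

Lemma weighted_demand_above_le_proportional q pb :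
  0 <= q -> nonneg_price pb ->
  \sum_(i | q * f i <= pb i) f i * D i pb <= \sum_(i < n) f i * D i (fun k => q * f k).
Proof.
move=> q_ge0 pb_ge0; set pq := fun k => q * f k.
pose pmax := fun l => Num.max (pb l) (pq l).
have pq_ge0 : nonneg_price pq by move=> l; apply: mulr_ge0.
have le_pb_max l : pb l <= pmax l by rewrite le_max lexx.
have le_pq_max l : pq l <= pmax l by rewrite le_max lexx orbT.
have pmax_ge0 : nonneg_price pmax by apply: nonneg_price_le le_pb_max.
apply: le_trans _ (weighted_demand_le_lower _ _ pq_ge0 le_pq_max).
apply: le_trans (_ : \sum_(i | q * f i <= pb i) f i * D i pmax <= _).
  apply: ler_sum => i le_pq_pb; rewrite ler_wpM2l //.
  by apply: demand_le_raise_others => //; apply: max_l.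
rewrite [leRHS](bigID (fun i => q * f i <= pb i)) lerDl.
by apply: sumr_ge0 => i _; apply: mulr_ge0 (f_ge0 i) (D_ge0 _ _ pmax_ge0).
Qed.

End OneCustomerType.

Theorem proposition1 (R : realFieldType) (n m : nat)
  (d : 'I_n -> 'I_m -> ('I_n -> R) -> R)
  (theta : 'I_m -> R) (f : 'I_n -> R) (pbar : 'I_m -> 'I_n -> R)
  (* demands are non-negative on R^n_{>=0} *)
  (d_ge0 : forall i j p, nonneg_price p -> 0 <= d i j p)
  (* weights *)
  (theta_gt0 : forall j, 0 < theta j)
  (theta_sum : \sum_(j < m) theta j = 1)
  (* pbar^j maximizes R_j over p >= 0, with positive (finite) components *)
  (pbar_gt0 : forall j i, 0 < pbar j i)
  (pbar_max : forall j p, nonneg_price p -> revenue d j p <= revenue d j (pbar j))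
  (* f is a positive vector *)
  (f_gt0 : forall i, 0 < f i)
  (* (P1): d_ij weakly increasing in p_k for k <> i *)
  (P1 : forall j i k, k != i -> forall p t t', nonneg_price p -> 0 <= t -> t <= t' ->
          d i j (set_price p k t) <= d i j (set_price p k t'))
  (* (P2): sum_i f_i d_ij weakly decreasing in p_k for every k *)
  (P2 : forall j k p t t', nonneg_price p -> 0 <= t -> t <= t' ->
          \sum_(i < n) f i * d i j (set_price p k t') <=
          \sum_(i < n) f i * d i j (set_price p k t)) :
  assumption_A1 d theta f pbar.
Proof.
move=> q q_ge0; apply: ler_sum => j _; apply: ler_wpM2l; first exact: ltW.
have -> : \sum_(i < n) f i * d i j (pbar j) * delta f pbar i j q =
          \sum_(i | q * f i <= pbar j i) f i * d i j (pbar j).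
  rewrite [RHS]big_mkcond; apply: eq_bigr => i _.
  by rewrite /delta ler_pdivlMr //; case: ifP; rewrite ?mulr1 ?mulr0.
apply: (@weighted_demand_above_le_proportional _ _ f (fun i => d i j)) => //.
- by move=> i; apply: ltW.
- by move=> i p; apply: d_ge0.
- by move=> i k; apply: P1.
- by move=> k; apply: P2.
- by move=> i; apply: ltW.
Qed.
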